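(* Let $P\in N_1$ be a sum of $8$ monomials, not necessarily distinct (i.e. $P(1)=8$). Then $P$ has unique factorisation inside $N_1$: any two factorisations of $P$ into irreducible elements of $N_1$ coincide up to the order of the factors.
   Context: $N_1=\mathbb{Z}_{\ge0}[X]$ is the semiring of univariate polynomials with nonnegative integer coefficients. An element $Q\neq0,1$ of $N_1$ is irreducible if in every factorisation $Q=ST$ with $S,T\in N_1$ one of $S,T$ is $1$. *)

From HB Require Import structures.
From mathcomp Require Import all_boot all_algebra.
Set Implicit Arguments. Unset Strict Implicit. Unset Printing Implicit Defensive.
Import GRing.Theory.
Local Open Scope ring_scope.

(* N_1 = Z_{>=0}[X] is represented by {poly nat}. *)
Definition N1 := {poly nat}.

Definition irreducibleN1 (Q : {poly nat}) : Prop :=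
  Q <> 0 /\ Q <> 1 /\
  forall S T : {poly nat}, Q = S * T -> S = 1 \/ T = 1.

Definition irr_factorisation (P : {poly nat}) (fs : seq {poly nat}) : Prop :=
  (forall f, f \in fs -> irreducibleN1 f) /\ \prod_(f <- fs) f = P.

From mathcomp Require Import all_boot all_algebra.
From mathcomp Require Import zify.
Set Implicit Arguments. Unset Strict Implicit. Unset Printing Implicit Defensive.

(* Write an element of N_1 as a sum of monomials X^i, i ranging over a multiset
   of exponents; multiplication becomes the sumset of multisets and p(1) counts
   the monomials.  An irreducible with zero constant term is X, and X is prime
   because constant terms multiply.  Every other irreducible f has f(1) >= 2, so
   in a factorisation of a polynomial with P(1) = 8 it has f(1) in {2, 4, 8}, and
   those with f(1) = 2 are the binomials 1 + X^b.  Two facts about exponent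
   multisets, (1+X^a)(1+X^b) = (1+X^c)(1+X^d) => a in {c, d} and
   (1+X^a)F = (1+X^d)G with a <> d and F, G of four monomials => (1+X^d) | F,
   show that 1 + X^b is prime in this range.  Hence every irreducible factor of
   one factorisation occurs in the other, and cancelling it inductively gives
   uniqueness. *)

Lemma perm_cons_cat (h r : nat) L R1 R2 : h = r ->
  perm_eq (h :: L) (R1 ++ r :: R2) = perm_eq L (R1 ++ R2).
Proof. by move=> ->; rewrite perm_sym -cat1s perm_catCA perm_cons perm_sym. Qed.

Lemma perm_via (L L' R R' : seq nat) :
  perm_eq L' R' -> perm_eq L L' -> perm_eq R' R -> perm_eq L R.
Proof. by move=> H1 H2 H3; apply: perm_trans H2 (perm_trans H1 H3). Qed.

(* [perm_solve] proves [perm_eq L R] when [R] is a rearrangement of [L] up to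
   equalities provable by [lia]; greedy matching is complete since equal
   elements can always be cancelled. *)
Ltac perm_solve_cons :=
  lazymatch goal with
  | |- is_true (perm_eq [::] [::]) => exact: perm_refl
  | |- is_true (perm_eq (?h :: ?L) ?R) => perm_solve_in h L (@nil nat) R
  end
with perm_solve_in h L pre R :=
  lazymatch R with
  | ?r :: ?R' =>
      let E := fresh "E" in
      tryif assert (E : h = r) by lia
      then change (is_true (perm_eq (h :: L) (pre ++ r :: R')));
           rewrite (perm_cons_cat L pre R' E) /=; clear E; perm_solve_cons
      else let pre' := eval cbn [cat] in (pre ++ [:: r]) in
           perm_solve_in h L pre' R'
  end.

Ltac perm_solve := cbn [cat]; perm_solve_cons.

Ltac solve_disj := match goal with
  | |- _ \/ _ => first [left; solve_disj | right; solve_disj]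
  | |- _ /\ _ => split; solve_disj
  | |- _ => lia
  end.

(* [perm_cases] exhausts a hypothesis [perm_eq L R] between short lists of
   linear nat expressions: the head of [L] is matched against every element
   of [R] in turn, branches refuted by [lia] are pruned, and each surviving
   complete matching must imply the goal, a disjunction of linear facts. *)
Ltac perm_cases :=
  match goal with
  | H : is_true (perm_eq [::] _) |- _ => clear H; solve_disj
  | H : is_true (perm_eq (?h :: ?L) ?R) |- _ =>
      let Hin := fresh "Hin" in
      assert (Hin : h \in R); [by rewrite -(perm_mem H) mem_head|];
      perm_cases_in H h L (@nil nat) R Hin
  end
with perm_cases_in H h L pre R Hin :=
  lazymatch R with
  | ?r :: ?R' =>
      let E := fresh "E" in
      case: (eqVneq h r) => E;
      [ repeat match goal with NE : is_true (_ != _) |- _ => clear NE end;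
        change (is_true (perm_eq (h :: L) (pre ++ r :: R'))) in H;
        rewrite (perm_cons_cat L pre R' E) /= in H; clear Hin;
        try subst; try (exfalso; lia); perm_cases
      | let pre' := eval cbn [cat] in (pre ++ [:: r]) in
        perm_cases_in H h L pre' R' Hin ]
  | [::] =>
      move: Hin; rewrite !inE;
      repeat match goal with NE : is_true (_ != _) |- _ =>
        try rewrite (negbTE NE); clear NE end;
      done
  end.

Lemma perm_pair_shift (a d y z q r : nat) : a < d ->
  perm_eq [:: y; z; a + y; a + z] [:: q; r; d + q; d + r] ->
  z = y + d \/ y = z + d.
Proof. by move=> ad H; perm_cases. Qed.

Lemma perm_pair_shift_mid (a m y z q r : nat) : 0 < m -> 0 < a ->
  perm_eq [:: m; y; z; a + y; a + z] [:: q; r; a + m + a; a + m + q; a + m + r] ->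
  y = a + m \/ z = a + m.
Proof. by move=> m0 a0 H; perm_cases. Qed.

Lemma perm_binom_pair (a b c d : nat) :
  perm_eq [:: 0; b; a; a + b] [:: 0; d; c; c + d] -> a = c \/ a = d.
Proof. by move=> H; perm_cases. Qed.

Lemma perm_quartic_head (a d y z q r : nat) : a < d ->
  perm_eq [:: 0; d; y; z; a; a + d; a + y; a + z]
          [:: 0; a; q; r; d; d + a; d + q; d + r] ->
  exists w, perm_eq [:: d; y; z] [:: d; w; d + w].
Proof.
move=> ad H.
have H' : perm_eq [:: y; z; a + y; a + z] [:: q; r; d + q; d + r].
  by rewrite -(perm_cat2l [:: 0; d; a; a + d]); apply: (perm_via H); perm_solve.
by case: (perm_pair_shift ad H') => ->; [exists y | exists z]; perm_solve.
Qed.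

Lemma perm_quartic_of_mem (a d x y z q r : nat) : a < d -> d \in [:: x; y; z] ->
  perm_eq [:: 0; x; y; z; a; a + x; a + y; a + z]
          [:: 0; a; q; r; d; d + a; d + q; d + r] ->
  exists w, perm_eq [:: x; y; z] [:: d; w; d + w].
Proof.
move=> ad; rewrite !inE => /or3P[] /eqP Ed H; subst d.
- exact: perm_quartic_head ad H.
- have [w Hw] : exists w, perm_eq [:: y; x; z] [:: y; w; y + w].
    by apply: (perm_quartic_head (q := q) (r := r) ad); apply: (perm_via H); perm_solve.
  by exists w; apply: perm_trans Hw; perm_solve.
- have [w Hw] : exists w, perm_eq [:: z; x; y] [:: z; w; z + w].
    by apply: (perm_quartic_head (q := q) (r := r) ad); apply: (perm_via H); perm_solve.
  by exists w; apply: perm_trans Hw; perm_solve.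
Qed.

Lemma perm_quartic_shift_mem (a m y z q r : nat) : 0 < m -> 0 < a ->
  perm_eq [:: 0; m; y; z; a; a + m; a + y; a + z]
          [:: 0; a; q; r; a + m; a + m + a; a + m + q; a + m + r] ->
  a + m \in [:: y; z].
Proof.
move=> m0 a0 H.
have H' : perm_eq [:: m; y; z; a + y; a + z] [:: q; r; a + m + a; a + m + q; a + m + r].
  by rewrite -(perm_cat2l [:: 0; a; a + m]); apply: (perm_via H); perm_solve.
by case: (perm_pair_shift_mid m0 a0 H') => <-; rewrite !inE eqxx ?orbT.
Qed.

Lemma perm_quartic_d_in (a d x y z q r : nat) : a < d ->
  perm_eq [:: 0; x; y; z; a; a + x; a + y; a + z]
          [:: 0; a; q; r; d; d + a; d + q; d + r] ->
  d \in [:: x; y; z].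
Proof.
move=> ad H.
have : d \in [:: 0; x; y; z; a; a + x; a + y; a + z] by rewrite (perm_mem H) !inE eqxx !orbT.
rewrite [d \in _]inE => /orP[/eqP d0|]; first lia.
rewrite -[_ :: _]/([:: x; y; z] ++ _) mem_cat => /orP[//|].
rewrite inE => /orP[/eqP da|]; first lia.
have [-> | a0] := posnP a; first by rewrite !add0n.
rewrite !inE => /or3P[] /eqP Ed; subst d.
- have x0 : 0 < x by lia.
  by move: (perm_quartic_shift_mem x0 a0 H); rewrite !inE => /orP[] ->; rewrite ?orbT.
- have y0 : 0 < y by lia.
  have H' : perm_eq [:: 0; y; x; z; a; a + y; a + x; a + z]
                    [:: 0; a; q; r; a + y; a + y + a; a + y + q; a + y + r].
    by apply: (perm_via H); perm_solve.
  by move: (perm_quartic_shift_mem y0 a0 H'); rewrite !inE => /orP[] ->; rewrite ?orbT.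
- have z0 : 0 < z by lia.
  have H' : perm_eq [:: 0; z; x; y; a; a + z; a + x; a + y]
                    [:: 0; a; q; r; a + z; a + z + a; a + z + q; a + z + r].
    by apply: (perm_via H); perm_solve.
  by move: (perm_quartic_shift_mem z0 a0 H'); rewrite !inE => /orP[] ->; rewrite ?orbT.
Qed.

(* The exponent form of (1 + X^a) F = (1 + X^d) G for F, G with four monomials
   and a < d: then F = (1 + X^d)(1 + X^w).  Since a < d, the exponent a of the
   left side is one of p, q, r; then d is one of x, y, z. *)
Lemma perm_quartic (a d x y z p q r : nat) : a < d ->
  perm_eq [:: 0; x; y; z; a; a + x; a + y; a + z]
          [:: 0; p; q; r; d; d + p; d + q; d + r] ->
  exists w, perm_eq [:: x; y; z] [:: d; w; d + w].
Proof.
move=> ad H.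
suff [q' [r' H']] : exists q' r', perm_eq [:: 0; x; y; z; a; a + x; a + y; a + z]
                                  [:: 0; a; q'; r'; d; d + a; d + q'; d + r'].
  exact: perm_quartic_of_mem ad (perm_quartic_d_in ad H') H'.
have : a \in [:: p; q; r; d; d + p; d + q; d + r].
  by move: H; rewrite perm_cons => /perm_mem <-; rewrite !inE eqxx !orbT.
rewrite !inE => /or4P[/eqP Ea | /eqP Ea | /eqP Ea | /or4P[] /eqP Ea]; try lia.
- by exists q, r; rewrite -Ea in H.
- by exists p, r; rewrite -Ea in H; apply: perm_trans H _; perm_solve.
- by exists p, q; rewrite -Ea in H; apply: perm_trans H _; perm_solve.
Qed.

Import GRing.Theory.
Local Open Scope ring_scope.

Definition sumXn (s : seq nat) : {poly nat} := \sum_(i <- s) 'X^i.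

Lemma sumXn_cons i s : sumXn (i :: s) = 'X^i + sumXn s.
Proof. exact: big_cons. Qed.

Lemma sumXn_cat s t : sumXn (s ++ t) = sumXn s + sumXn t.
Proof. exact: big_cat. Qed.

Lemma coef_sumXn s k : (sumXn s)`_k = count_mem k s.
Proof.
elim: s => [|i s IHs]; first by rewrite /sumXn big_nil coef0.
by rewrite sumXn_cons coefD coefXn IHs /= [k == i]eq_sym; case: (i == k).
Qed.

Lemma perm_sumXn s t : perm_eq s t -> sumXn s = sumXn t.
Proof. exact: perm_big. Qed.

Lemma sumXn_inj s t : sumXn s = sumXn t -> perm_eq s t.
Proof. by move=> E; apply/allP => k _ /=; rewrite -!coef_sumXn E. Qed.

Lemma sumXnM s t : sumXn s * sumXn t = sumXn [seq (i + j)%N | i <- s, j <- t].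
Proof.
elim: s => [|i s IHs]; first by rewrite /sumXn big_nil mul0r.
rewrite sumXn_cons mulrDl IHs /= sumXn_cat /sumXn big_map mulr_sumr.
by congr (_ + _); apply: eq_bigr => j _; rewrite exprD.
Qed.

Lemma horner1_sumXn s : (sumXn s).[1] = size s.
Proof.
elim: s => [|i s IHs]; first by rewrite /sumXn big_nil horner0.
by rewrite sumXn_cons hornerD hornerXn expr1n IHs.
Qed.

Lemma sumXn_map_succ s : sumXn (map succn s) = 'X * sumXn s.
Proof. by rewrite /sumXn big_map mulr_sumr; apply: eq_bigr => i _; rewrite exprS. Qed.

Lemma sumXnP (p : {poly nat}) : exists s, p = sumXn s.
Proof.
elim/poly_ind: p => [|p c [s ->]]; first by exists [::]; rewrite /sumXn big_nil.
exists (map succn s ++ nseq c 0%N).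
rewrite sumXn_cat sumXn_map_succ mulrC /sumXn big_nseq.
congr (_ + _); elim: c => [|c IHc] /=; first by rewrite polyC0.
by rewrite -IHc expr0 -[c.+1]/(1 + c)%R polyCD polyC1.
Qed.

Lemma mulpI_nat (f g h : {poly nat}) : f != 0 -> f * g = f * h -> g = h.
Proof.
move=> nz_f E.
have inj_Posz : injective Posz by move=> ? ? [].
apply: (map_inj_poly (f := Posz)) => //.
apply: (mulfI (x := map_poly Posz f)); last by rewrite -!rmorphM E.
by rewrite -size_poly_eq0 size_map_inj_poly // size_poly_eq0.
Qed.

Lemma coef0_prod_eq0 (gs : seq {poly nat}) :
  ((\prod_(g <- gs) g)`_0 == 0%N) = has (fun g : {poly nat} => g`_0 == 0%N) gs.
Proof.
elim: gs => [|g gs IHgs]; first by rewrite big_nil coefC.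
by rewrite big_cons coef0M /= -IHgs -muln_eq0.
Qed.

Lemma horner1_gt0 (f : {poly nat}) : f`_0 != 0%N -> (0 < f.[1])%N.
Proof.
have [s ->] := sumXnP f; rewrite coef_sumXn horner1_sumXn -lt0n => /leq_trans; apply.
exact: count_size.
Qed.

Lemma sumXn_of_coef0 (f : {poly nat}) n : f`_0 != 0%N -> f.[1] = n.+1 ->
  exists2 t, size t = n & f = sumXn (0%N :: t).
Proof.
have [s ->] := sumXnP f; rewrite coef_sumXn horner1_sumXn => s0 sz_s.
have s0_in : 0%N \in s by rewrite -has_pred1 has_count lt0n.
exists (rem 0%N s); first by rewrite size_rem // sz_s.
exact/perm_sumXn/perm_to_rem.
Qed.

Lemma horner1_eq1 (f : {poly nat}) : f`_0 != 0%N -> f.[1] = 1%N -> f = 1.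
Proof.
by move=> f0 /(sumXn_of_coef0 f0) [[|]] // _ ->; rewrite sumXn_cons /sumXn big_nil addr0.
Qed.

Lemma coef0_eq0_mulX (p : {poly nat}) : p`_0 = 0%N -> exists q, p = 'X * q.
Proof.
have [s ->] := sumXnP p; rewrite coef_sumXn => /count_memPn s0.
exists (sumXn (map predn s)); rewrite -sumXn_map_succ -map_comp map_id_in //.
by move=> [|i] // s0'; rewrite s0' in s0.
Qed.

Lemma irrN1_neq0 (f : {poly nat}) : irreducibleN1 f -> f != 0.
Proof. by case=> /eqP. Qed.

Lemma X_neq1 : 'X != 1 :> {poly nat}.
Proof. by apply/eqP => /(congr1 (fun p : {poly nat} => p`_0)); rewrite coefX coefC. Qed.

Lemma irrN1_coef0 (f : {poly nat}) : irreducibleN1 f -> f`_0 = 0%N -> f = 'X.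
Proof.
move=> [_ [_ irr_f]] /coef0_eq0_mulX [q Ef].
by case: (irr_f _ _ Ef) => [X1 | q1]; [move/eqP: X_neq1 | rewrite Ef q1 mulr1].
Qed.

Lemma irrN1_horner1 (f : {poly nat}) : irreducibleN1 f -> f`_0 != 0%N -> (2 <= f.[1])%N.
Proof.
move=> [_ [f_neq1 _]] f0; have := horner1_gt0 f0.
by case E: f.[1] => [|[|n]] // _; case: f_neq1; exact: horner1_eq1.
Qed.

Lemma X_mem_prod H (gs : seq {poly nat}) : {in gs, forall g, irreducibleN1 g} ->
  'X * H = \prod_(g <- gs) g -> 'X \in gs.
Proof.
move=> irr_gs E.
have : has (fun g : {poly nat} => g`_0 == 0%N) gs.
  by rewrite -coef0_prod_eq0 -E coef0M coefX.
by case/hasP => g g_in /eqP g0; rewrite -(irrN1_coef0 (irr_gs g g_in) g0).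
Qed.

Definition binX (a : nat) : {poly nat} := 1 + 'X^a.

Lemma binX_sumXn a : binX a = sumXn [:: 0%N; a].
Proof. by rewrite !sumXn_cons /sumXn big_nil addr0 expr0. Qed.

Lemma horner1_binX a : (binX a).[1] = 2%N.
Proof. by rewrite binX_sumXn horner1_sumXn. Qed.

Lemma coef0_binX a : (binX a)`_0 != 0%N.
Proof. by rewrite binX_sumXn coef_sumXn. Qed.

Lemma binX_neq0 a : binX a != 0.
Proof. by apply/eqP => /(congr1 (horner^~ 1)); rewrite horner1_binX horner0. Qed.

Lemma binX_neq1 a : binX a != 1.
Proof. by apply/eqP => /(congr1 (horner^~ 1)); rewrite horner1_binX hornerC. Qed.

Lemma binX_of_horner1 (f : {poly nat}) :
  f`_0 != 0%N -> f.[1] = 2%N -> exists a, f = binX a.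
Proof. by move=> f0 /(sumXn_of_coef0 f0) [[|a []]] // _ ->; exists a; rewrite binX_sumXn. Qed.

Lemma irrN1_binXM b R : irreducibleN1 (binX b * R) -> R = 1.
Proof. by case=> _ [_ /(_ _ _ erefl)] [/eqP | //]; rewrite (negbTE (binX_neq1 b)). Qed.

Lemma binXM a b : binX a * binX b = sumXn [:: 0; b; a; a + b]%N.
Proof. by rewrite !binX_sumXn sumXnM /= !add0n !addn0. Qed.

Lemma eq_binXM a b c d : binX a * binX b = binX c * binX d -> a = c \/ a = d.
Proof. by rewrite !binXM => /sumXn_inj; apply: perm_binom_pair. Qed.

Lemma binX_dvd_quartic_lt a d (F G : {poly nat}) : (a < d)%N ->
  F`_0 != 0%N -> F.[1] = 4%N -> G`_0 != 0%N -> G.[1] = 4%N ->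
  binX a * F = binX d * G -> exists w, F = binX d * binX w.
Proof.
move=> ad F0 /(sumXn_of_coef0 F0) [[|x [|y [|z []]]] // _ ->].
move=> G0 /(sumXn_of_coef0 G0) [[|p [|q [|r []]]] // _ ->].
rewrite !binX_sumXn !sumXnM /= !add0n !addn0.
move=> /sumXn_inj /(perm_quartic ad) [w Hw]; exists w.
rewrite binX_sumXn sumXnM /= !add0n !addn0; apply: perm_sumXn.
by rewrite perm_cons; apply: perm_trans Hw _; perm_solve.
Qed.

Lemma binX_dvd_quartic a d (F G : {poly nat}) : a != d ->
  F`_0 != 0%N -> F.[1] = 4%N -> G`_0 != 0%N -> G.[1] = 4%N ->
  binX a * F = binX d * G -> exists w, F = binX d * binX w.
Proof.
case: ltngtP => // ad _ F0 F4 G0 G4 E; first exact: binX_dvd_quartic_lt ad F0 F4 G0 G4 E.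
have [w EG] := binX_dvd_quartic_lt ad G0 G4 F0 F4 (esym E).
by exists w; apply: (mulpI_nat (binX_neq0 a)); rewrite E EG mulrCA.
Qed.

Lemma dvdn8_factors u h : (2 <= u)%N -> (2 <= h)%N -> (u * h %| 8)%N ->
  [\/ u = 2 /\ h = 2, u = 2 /\ h = 4 | u = 4 /\ h = 2]%N.
Proof.
move=> u2 h2 dvd8; have le8 := dvdn_leq (isT : (0 < 8)%N) dvd8.
have u4 : (u <= 4)%N by nia.
have h4 : (h <= 4)%N by nia.
move: u2 h2 u4 h4 dvd8; clear le8.
by case: u => [|[|[|[|[|]]]]] //; case: h => [|[|[|[|[|]]]]] // *;
  [constructor 1 | constructor 2 | constructor 3].
Qed.

Lemma binX_euclid b (f H R : {poly nat}) : irreducibleN1 f -> f`_0 != 0%N ->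
  f != binX b -> R`_0 != 0%N -> f * H = binX b * R -> ((f * H).[1] %| 8)%N ->
  exists H', H = binX b * H'.
Proof.
move=> irr_f f0 f_neq_b R0 E dvd8.
have : (f * H)`_0 != 0%N by rewrite E coef0M muln_eq0 negb_or coef0_binX.
rewrite coef0M muln_eq0 negb_or => /andP[_ H0].
have fHR : (f.[1] * H.[1] = 2 * R.[1])%N.
  by move: (congr1 (horner^~ 1) E); rewrite !hornerM horner1_binX.
have [H1 | H2] : H.[1] = 1%N \/ (2 <= H.[1])%N by have := horner1_gt0 H0; lia.
  move: irr_f f_neq_b; rewrite -(mulr1 f) -(horner1_eq1 H0 H1) E.
  by move/irrN1_binXM ->; rewrite mulr1 eqxx.
rewrite hornerM natrME in dvd8.
case: (dvdn8_factors (irrN1_horner1 irr_f f0) H2 dvd8) => [[f2 h2]|[f2 h4]|[f4 h2]].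
- have [a Ef] := binX_of_horner1 f0 f2; have [w EH] := binX_of_horner1 H0 h2.
  have [e ER] : exists e, R = binX e by apply: binX_of_horner1 R0 _; lia.
  move: E; rewrite Ef EH ER => /esym/eq_binXM [ba | ->]; last by exists 1; rewrite mulr1.
  by move: f_neq_b; rewrite Ef ba eqxx.
- have [a Ef] := binX_of_horner1 f0 f2.
  have a_neq_b : a != b by apply: contraNneq f_neq_b => ab; rewrite Ef ab eqxx.
  have [w EH] : exists w, H = binX b * binX w.
    by apply: (binX_dvd_quartic a_neq_b H0 h4 R0); [lia | rewrite -Ef].
  by exists (binX w).
- have [w EH] := binX_of_horner1 H0 h2.
  have [wb | w_neq_b] := eqVneq w b; first by exists 1; rewrite EH wb mulr1.
  have [v Ef] : exists v, f = binX b * binX v.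
    by apply: (binX_dvd_quartic w_neq_b f0 f4 R0); [lia | rewrite mulrC -EH].
  by move: irr_f; rewrite Ef => /irrN1_binXM /eqP; rewrite (negbTE (binX_neq1 v)).
Qed.

Lemma prod_coef0_neq0 (gs : seq {poly nat}) :
  {in gs, forall g : {poly nat}, g`_0 != 0%N} -> (\prod_(g <- gs) g)`_0 != 0%N.
Proof.
by move=> gs0; rewrite coef0_prod_eq0 -all_predC; apply/allP => g /gs0 /= ->.
Qed.

Lemma binX_mem_factors (gs : seq {poly nat}) :
  {in gs, forall g, irreducibleN1 g /\ g`_0 != 0%N} ->
  ((\prod_(g <- gs) g).[1] %| 8)%N -> (1 < size gs)%N -> exists b, binX b \in gs.
Proof.
case: gs => [|g1 [|g2 gs]] // irr_gs; rewrite !big_cons !hornerM !natrME => dvd8 _.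
have [irr1 c1] := irr_gs g1 (mem_head _ _).
have [irr2 c2] : irreducibleN1 g2 /\ g2`_0 != 0%N by apply: irr_gs; rewrite !inE eqxx orbT.
have r0 : (0 < (\prod_(g <- gs) g).[1])%N.
  apply/horner1_gt0/prod_coef0_neq0 => g g_in.
  by have [] := irr_gs g; rewrite // !inE g_in !orbT.
have v1 := irrN1_horner1 irr1 c1; have v2 := irrN1_horner1 irr2 c2.
have le8 : (g1.[1] * g2.[1] <= 8)%N.
  by apply: leq_trans (dvdn_leq (isT : (0 < 8)%N) dvd8); rewrite mulnA leq_pmulr.
have [e1 | e2] : g1.[1] = 2%N \/ g2.[1] = 2%N by nia.
- have [b ->] := binX_of_horner1 c1 e1; exists b; exact: mem_head.
- have [b Eb] := binX_of_horner1 c2 e2; exists b; by rewrite -Eb !inE eqxx orbT.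
Qed.

Lemma cofactor_dvd_of_notin (f H : {poly nat}) (gs : seq {poly nat}) :
  irreducibleN1 f -> f`_0 != 0%N -> f \notin gs ->
  {in gs, forall g, irreducibleN1 g} -> f * H = \prod_(g <- gs) g ->
  ((f * H).[1] %| 8)%N -> exists2 g, g \in gs & exists H', H = g * H'.
Proof.
move=> irr_f f0 f_notin irr_gs E dvd8.
have [X_in | X_notin] := boolP ('X \in gs).
  exists 'X => //; apply: coef0_eq0_mulX; apply/eqP.
  move: (congr1 (fun p : {poly nat} => p`_0) E).
  rewrite (big_rem _ X_in) !coef0M coefX /= mul0r natrME => /eqP.
  by rewrite muln_eq0 (negbTE f0).
have irrX'_gs : {in gs, forall g, irreducibleN1 g /\ g`_0 != 0%N}.
  move=> g g_in; split; first exact: irr_gs.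
  by apply: contraNneq X_notin => /(irrN1_coef0 (irr_gs g g_in)) <-.
have [gt1 | le1] := ltnP 1 (size gs).
  have [b b_in] : exists b, binX b \in gs.
    by apply: binX_mem_factors irrX'_gs _ gt1; rewrite -E.
  exists (binX b) => //.
  apply: (binX_euclid irr_f f0 _ _ (etrans E (big_rem _ b_in)) dvd8).
  - by apply: contraNneq f_notin => ->.
  - by apply: prod_coef0_neq0 => g /mem_rem /irrX'_gs [].
case: gs {X_notin irrX'_gs} irr_gs E f_notin le1 => [|g []] // irr_gs E f_notin _.
- move: (congr1 (horner^~ 1) E); rewrite big_nil hornerC hornerM natrME => /eqP.
  by rewrite muln_eq1 => /andP[/eqP f1 _]; move: (irrN1_horner1 irr_f f0); rewrite f1.
- rewrite big_cons big_nil mulr1 in E.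
  have [_ [_ /(_ _ _ (esym E))]] := irr_gs g (mem_head _ _).
  case=> [f1 | H1]; first by case: irr_f => _ [].
  by move: f_notin; rewrite -E H1 mulr1 mem_head.
Qed.

Lemma irrN1_mem_prod (f H : {poly nat}) (gs : seq {poly nat}) : irreducibleN1 f ->
  {in gs, forall g, irreducibleN1 g} -> f * H = \prod_(g <- gs) g ->
  ((f * H).[1] %| 8)%N -> f \in gs.
Proof.
move=> irr_f; have [f0 | f0] := eqVneq f`_0 0%N.
  by rewrite (irrN1_coef0 irr_f f0) => irr_gs E _; exact: X_mem_prod irr_gs E.
have [n] := ubnP (size gs); elim: n gs H => // n IHn gs H sz_gs irr_gs E dvd8.
have [// | f_notin] := boolP (f \in gs).
have [g g_in [H' EH]] := cofactor_dvd_of_notin irr_f f0 f_notin irr_gs E dvd8.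
have E' : f * H' = \prod_(h <- rem g gs) h.
  apply: (mulpI_nat (irrN1_neq0 (irr_gs g g_in))).
  by rewrite mulrCA -EH E (big_rem _ g_in).
suff f_in : f \in rem g gs by rewrite (mem_rem f_in) in f_notin.
apply: IHn E' _.
- have gs_gt0 : (0 < size gs)%N by rewrite lt0n size_eq0; apply: contraTneq g_in => ->.
  by rewrite size_rem // -ltnS prednK.
- by move=> h /mem_rem; apply: irr_gs.
- by apply: dvdn_trans dvd8; rewrite EH mulrCA [in X in (_ %| X)%N]hornerM natrME dvdn_mull.
Qed.

Lemma perm_eq_irrN1_factors (fs gs : seq {poly nat}) :
  {in fs, forall f, irreducibleN1 f} -> {in gs, forall g, irreducibleN1 g} ->
  \prod_(f <- fs) f = \prod_(g <- gs) g -> ((\prod_(f <- fs) f).[1] %| 8)%N ->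
  perm_eq fs gs.
Proof.
elim: fs gs => [|f fs IHfs] gs irr_fs irr_gs E dvd8.
  case: gs irr_gs E => [// | g gs] irr_gs /esym; rewrite big_cons => E.
  suff : g \in [::] by [].
  apply: (irrN1_mem_prod (irr_gs g (mem_head _ _)) _ E) => //.
  by rewrite E big_nil hornerC dvd1n.
rewrite big_cons in E dvd8.
have f_in : f \in gs by apply: (irrN1_mem_prod (irr_fs f (mem_head _ _)) irr_gs E).
rewrite (permPr (perm_to_rem f_in)) perm_cons; apply: IHfs.
- by move=> h h_in; apply: irr_fs; rewrite inE h_in orbT.
- by move=> h /mem_rem; apply: irr_gs.
- apply: (mulpI_nat (irrN1_neq0 (irr_fs f (mem_head _ _)))).
  by rewrite E (big_rem _ f_in).
- by apply: dvdn_trans dvd8; rewrite hornerM natrME dvdn_mull.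
Qed.

Unset Implicit Arguments.

Theorem mainTheorem10 (P : {poly nat}) :
  P.[1] = 8%N ->
  forall fs gs : seq {poly nat},
    irr_factorisation P fs -> irr_factorisation P gs -> perm_eq fs gs.
Proof.
move=> P8 fs gs [irr_fs Efs] [irr_gs Egs].
by apply: perm_eq_irrN1_factors; rewrite ?Efs ?Egs ?P8.
Qed.
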